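(* Let $d\geq 1$. For every $d$-dimensional cube tiling $\mathcal{T}$ one has $m_2(\mathcal{T})\le m_2(\mathcal{R})$, where $\mathcal{R}$ is the regular cube tiling $\{z+[0,2[^d : z\in 2\mathbb{Z}^d\}$; i.e. the regular cube tiling has the highest second moment among cube tilings.
   Context: A $d$-dimensional cube tiling is a $4\mathbb{Z}^d$-invariant tiling of $\mathbb{R}^d$ by translates $y+[0,2[^d$ with $y\in\mathbb{Z}^d$. For $z\in\mathbb{Z}^d$, $N_z(\mathcal{T})$ is the number of cubes of $\mathcal{T}$ contained in $z+[0,4[^d$, and the second moment is $m_2(\mathcal{T})=4^{-d}\sum_{z\in\{0,1,2,3\}^d}N_z(\mathcal{T})^2$. *)

From mathcomp Require Import all_boot all_order all_algebra.
From mathcomp Require Import reals.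
Set Implicit Arguments. Unset Strict Implicit. Unset Printing Implicit Defensive.
Import Order.TTheory GRing.Theory Num.Theory.
Local Open Scope ring_scope.

(* A family of cubes y + [0,2[^d with y in Z^d is represented by the
   (boolean) predicate T on Z^d = ('I_d -> int) selecting the base points y. *)

Definition is_cube_tiling (R : realType) (d : nat) (T : pred ('I_d -> int)) : Prop :=
  (forall x : 'I_d -> R,
     exists! y : 'I_d -> int,
       T y /\ (forall i, (y i)%:~R <= x i /\ x i < (y i)%:~R + 2)) /\
  (forall (y : 'I_d -> int) (e : 'I_d -> int),
     T y -> T (fun i => y i + 4 * e i)).

Definition cube_in_box (d : nat) (y z : 'I_d -> int) : bool :=
  [forall i, (z i <= y i) && (y i + 2 <= z i + 4)].

(* N_z(T): number of cubes of T contained in z + [0,4[^d.  Any such cube has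
   base point y = z + k with k in {0,1,2}^d, so we count over those k
   (the map k |-> z + k is injective). *)
Definition Nz (d : nat) (T : pred ('I_d -> int)) (z : 'I_d -> int) : nat :=
  #|[set k : {ffun 'I_d -> 'I_3} |
      T (fun i => z i + (k i)%:Z) && cube_in_box (fun i => z i + (k i)%:Z) z]|.

Definition m2 (d : nat) (T : pred ('I_d -> int)) : rat :=
  (4%:R ^+ d)^-1 *
  \sum_(z : {ffun 'I_d -> 'I_4}) ((Nz T (fun i => (z i)%:Z)) ^ 2)%:R.

Definition regular_tiling (d : nat) : pred ('I_d -> int) :=
  fun y => [forall i, ~~ odd `|y i|%N].

From mathcomp Require Import all_boot all_order all_algebra.
From mathcomp Require Import reals.
From mathcomp Require Import zify.

Set Implicit Arguments.
Unset Strict Implicit.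
Unset Printing Implicit Defensive.
Import Order.TTheory GRing.Theory Num.Theory.
Local Open Scope ring_scope.

(* The sum of the N_z(T)^2 over z in {0,..,3}^d counts the triples (z, y, y')
   of cubes y, y' of T inside the box z + [0,4[^d.  We label such a triple, in
   each coordinate, by the half of the period 4 that contains y_i and by one of
   five classes of the offset pair (y_i - z_i, y'_i - z_i): 10^d labels.  The
   labelling is injective because two cubes of a tiling that share an integer
   point coincide: cubes of T in the same halves agree modulo 4Z^d, and the
   class of the offsets exhibits an integer point of y' relative to y.  For the
   regular tiling every coordinate contributes 2^2 + 1 + 2^2 + 1 = 10, so its
   count is exactly 10^d. *)

Section SumOfSquares.
Variables (A B : finType) (P : A -> B -> bool).

Lemma sum_card_sqr :
  (\sum_a #|[set b | P a b]| ^ 2)%N =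
  #|[set x : A * B * B | P x.1.1 x.1.2 && P x.1.1 x.2]|.
Proof.
rewrite -sum1dep_card [RHS]big_mkcond /=.
rewrite -[RHS](pair_bigA _ (fun ab b' => if P ab.1 ab.2 && P ab.1 b' then 1 else 0)%N) /=.
rewrite -[RHS](pair_bigA _ (fun a b => \sum_b' if P a b && P a b' then 1 else 0)%N) /=.
apply: eq_bigr => a _; rewrite -sum1dep_card big_mkcond -mulnn big_distrl /=.
apply: eq_bigr => b _; rewrite big_distrr /=.
by apply: eq_bigr => b' _; case: (P a b); case: (P a b').
Qed.

End SumOfSquares.

Section BoxCounts.
Variable d : nat.
Local Notation Z4 := {ffun 'I_d -> 'I_4}.
Local Notation K3 := {ffun 'I_d -> 'I_3}.

Definition box_point (z : Z4) (k : K3) : 'I_d -> int := fun i => (z i)%:Z + (k i)%:Z.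

Definition cube_pairs (T : pred ('I_d -> int)) : {set Z4 * K3 * K3} :=
  [set x | T (box_point x.1.1 x.1.2) && T (box_point x.1.1 x.2)].

Lemma Nz_box_point (T : pred ('I_d -> int)) (z : Z4) :
  Nz T (fun i => (z i)%:Z) = #|[set k : K3 | T (box_point z k)]|.
Proof.
apply: eq_card => k; rewrite !inE.
suff -> : cube_in_box (box_point z k) (fun i => (z i)%:Z) by rewrite andbT.
apply/forallP => i; rewrite /box_point; have := ltn_ord (k i).
by move: (k i : nat) (z i : nat) => b a b_lt3; apply/andP; split; lia.
Qed.

Lemma sum_Nz_sqr (T : pred ('I_d -> int)) :
  (\sum_(z : Z4) Nz T (fun i => (z i)%:Z) ^ 2)%N = #|cube_pairs T|.
Proof.
rewrite -(sum_card_sqr (fun z k => T (box_point z k))).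
by apply: eq_bigr => z _; rewrite Nz_box_point.
Qed.

End BoxCounts.

(* The nine pairs (k, k') in {0,1,2}^2 fall into five classes [pair_code k k'];
   within a class the offsets k' - k are pairwise distinct, and the intervals
   [k' - k, k' - k + 1] all contain the integer [code_point] of the class. *)
Definition pair_code (k k' : nat) : nat :=
  match k, k' with
  | 0, 0 => 1 | 0, 1 => 2 | 0, _ => 4
  | 1, 0 => 0 | 1, 1 => 2 | 1, _ => 3
  | _, 0 => 0 | _, 1 => 1 | _, _ => 3
  end.

Definition code_point (c : nat) : int :=
  match c with 0 => -1 | 1 => 0 | 2 | 3 => 1 | _ => 3 end.

Lemma pair_code_lt (k k' : nat) : (pair_code k k' < 5)%N.
Proof. by case: k => [|[|k]]; case: k' => [|[|k']]. Qed.

Lemma code_point_mem (k k' : nat) : (k < 3)%N -> (k' < 3)%N ->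
  k'%:Z <= k%:Z + code_point (pair_code k k') <= k'%:Z + 1.
Proof. by case: k => [|[|[|k]]] //; case: k' => [|[|[|k']]]. Qed.

Lemma pair_code_inj (k1 k1' k2 k2' : nat) :
  (k1 < 3)%N -> (k1' < 3)%N -> (k2 < 3)%N -> (k2' < 3)%N ->
  pair_code k1 k1' = pair_code k2 k2' -> k1'%:Z - k1%:Z = k2'%:Z - k2%:Z ->
  k1 = k2 /\ k1' = k2'.
Proof.
by case: k1 => [|[|[|k1]]] //; case: k1' => [|[|[|k1']]] //;
   case: k2 => [|[|[|k2]]] //; case: k2' => [|[|[|k2']]].
Qed.

Section CubeTiling.
Variables (R : realType) (d : nat) (T : pred ('I_d -> int)).
Hypothesis tiling : is_cube_tiling R T.

Lemma tiling_eq_of_common_point (a b p : 'I_d -> int) : T a -> T b ->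
  (forall i, a i <= p i <= a i + 1) -> (forall i, b i <= p i <= b i + 1) ->
  a = b.
Proof.
move=> Ta Tb pa pb; have [y [_ y_uniq]] := tiling.1 (fun i => (p i)%:~R).
suff cube_p c : T c -> (forall i, c i <= p i <= c i + 1) -> y = c.
  by rewrite -(cube_p a) // -(cube_p b).
move=> Tc pc; apply: y_uniq; split => // i; have /andP[lo hi] := pc i.
split; first by rewrite ler_int.
by rewrite -[2]/((2 : int)%:~R) -intrD ltr_int; lia.
Qed.

Lemma tiling_eq_of_near (a b : 'I_d -> int) : T a -> T b ->
  (forall i, `|a i - b i| <= 1) -> a = b.
Proof.
move=> Ta Tb near.
by apply: (tiling_eq_of_common_point (p := fun i => Num.max (a i) (b i))) => // i;
  have := near i; lia.
Qed.

Lemma tiling_eq_mod4 (a b : 'I_d -> nat) :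
  T (fun i => (a i)%:Z) -> T (fun i => (b i)%:Z) ->
  (forall i, odd (a i)./2 = odd (b i)./2) ->
  exists e : 'I_d -> int, forall i, (a i)%:Z = (b i)%:Z + 4 * e i.
Proof.
move=> Ta Tb half_eq; pose e i := (a i %/ 4)%N%:Z - (b i %/ 4)%N%:Z.
suff ab : (fun i => (a i)%:Z) = (fun i => (b i)%:Z + 4 * e i).
  by exists e => i; rewrite [LHS](congr1 (fun f => f i) ab).
apply: tiling_eq_of_near => // [|j]; first exact: tiling.2.
by have := half_eq j; rewrite /e; lia.
Qed.

Local Notation Z4 := {ffun 'I_d -> 'I_4}.
Local Notation K3 := {ffun 'I_d -> 'I_3}.

Definition pair_encoding (x : Z4 * K3 * K3) :
    {ffun 'I_d -> bool} * {ffun 'I_d -> 'I_5} :=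
  let: (z, k, k') := x in
  ([ffun i => odd (z i + k i)./2], [ffun i => inord (pair_code (k i) (k' i))]).

Lemma pair_encoding_inj (z1 z2 : Z4) (k1 k1' k2 k2' : K3) :
  T (box_point z1 k1) -> T (box_point z1 k1') ->
  T (box_point z2 k2) -> T (box_point z2 k2') ->
  pair_encoding (z1, k1, k1') = pair_encoding (z2, k2, k2') ->
  (z1, k1, k1') = (z2, k2, k2').
Proof.
move=> T1 T1' T2 T2' [/ffunP half_eq /ffunP code_eq].
have half i : odd (z1 i + k1 i)./2 = odd (z2 i + k2 i)./2.
  by have := half_eq i; rewrite !ffunE.
have code i : pair_code (k1 i) (k1' i) = pair_code (k2 i) (k2' i).
  have := congr1 val (code_eq i).
  by rewrite !ffunE /= !inordK ?pair_code_lt.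
have [e y_eq] := tiling_eq_mod4 T1 T2 half.
have y'_eq : box_point z1 k1' = (fun i => box_point z2 k2' i + 4 * e i).
  apply: (tiling_eq_of_common_point
    (p := fun i => box_point z1 k1 i + code_point (pair_code (k1 i) (k1' i)))) => // [|i|i].
  - exact: tiling.2.
  - have := code_point_mem (ltn_ord (k1 i)) (ltn_ord (k1' i)); rewrite /box_point; lia.
  - have := code_point_mem (ltn_ord (k2 i)) (ltn_ord (k2' i)).
    have := y_eq i; rewrite code /box_point; lia.
have k_eq i : k1 i = k2 i /\ k1' i = k2' i.
  have := congr1 (fun f => f i) y'_eq; have := y_eq i; rewrite /box_point /= => y1 y1'.
  have [|k_i k'_i] := pair_code_inj (ltn_ord (k1 i)) (ltn_ord (k1' i)) (ltn_ord (k2 i))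
    (ltn_ord (k2' i)) (code i); first lia.
  by split; apply: val_inj.
have z_eq i : z1 i = z2 i.
  apply: val_inj => /=; have /= := congr1 val (k_eq i).1.
  by have := y_eq i; have := ltn_ord (z1 i); have := ltn_ord (z2 i); lia.
by congr (_, _, _); apply/ffunP => i; [exact: z_eq | exact: (k_eq i).1 | exact: (k_eq i).2].
Qed.

Lemma card_cube_pairs_le : (#|cube_pairs T| <= 10 ^ d)%N.
Proof.
rewrite -(card_in_imset (f := pair_encoding)).
  apply: leq_trans (max_card _) _.
  by rewrite card_prod !card_ffun card_bool !card_ord -expnMn; exact: leqnn.
move=> [[z1 k1] k1'] [[z2 k2] k2']; rewrite !inE /= => /andP[T1 T1'] /andP[T2 T2'].
exact: pair_encoding_inj.
Qed.

End CubeTiling.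

Section RegularTiling.
Variable d : nat.

Lemma regular_tiling_box_point (z : {ffun 'I_d -> 'I_4}) (k : {ffun 'I_d -> 'I_3}) :
  regular_tiling (box_point z k) = (\prod_i ~~ odd (z i + k i))%N :> nat.
Proof.
rewrite /regular_tiling /box_point.
case: (boolP [forall i, _]) => [/forallP even_k | /forallPn[i odd_i]].
  by rewrite big1 // => i _; move: (even_k i); rewrite -PoszD absz_nat => /negbTE ->.
by rewrite (bigD1 i) //=; move: odd_i; rewrite -PoszD absz_nat negbK => ->; rewrite mul0n.
Qed.

Lemma Nz_regular (z : {ffun 'I_d -> 'I_4}) :
  Nz (@regular_tiling d) (fun i => (z i)%:Z) =
  (\prod_i \sum_(b < 3) ~~ odd (z i + b))%N.
Proof.
rewrite Nz_box_point -sum1dep_card big_mkcond bigA_distr_bigA /=.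
by apply: eq_bigr => k _; rewrite -regular_tiling_box_point.
Qed.

Lemma sum_Nz_sqr_regular :
  (\sum_(z : {ffun 'I_d -> 'I_4}) Nz (@regular_tiling d) (fun i => (z i)%:Z) ^ 2)%N =
  (10 ^ d)%N.
Proof.
pose evens (c : 'I_4) := (\sum_(b < 3) ~~ odd (c + b))%N.
under eq_bigr => z _ do rewrite Nz_regular -mulnn -big_split /=.
rewrite -(bigA_distr_bigA (fun _ c => evens c * evens c)%N) /=.
rewrite (eq_bigr (fun _ => 10%N)) => [|i _]; first by rewrite prod_nat_const card_ord.
by rewrite /evens !big_ord_recl !big_ord0.
Qed.

End RegularTiling.

Theorem theorem4 (R : realType) (d : nat) (T : pred ('I_d -> int)) :
  (1 <= d)%N -> is_cube_tiling R T -> m2 T <= m2 (@regular_tiling d).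
Proof.
move=> _ tiling; apply: ler_wpM2l; first by rewrite invr_ge0 exprn_ge0.
rewrite -!natr_sum ler_nat sum_Nz_sqr_regular sum_Nz_sqr.
exact: card_cube_pairs_le tiling.
Qed.
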